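(* Let $G=(V,E,s,t)$ be a directed $st$-graph. Then $G$ is weak if and only if there exist a minimal vertex separator $T$ of $G$, vertices $a,b\in T$ (possibly $a=b$), and a directed walk of length at least one from $a$ to $b$.
   Context: A directed $st$-graph $G=(V,E,s,t)$ is a finite directed graph with no self-loops and no parallel edges, with distinct source $s$ (no incoming edges) and sink $t$ (no outgoing edges), such that every vertex lies on some directed walk from $s$ to $t$. An $st$-path (or just path) is a directed walk from $s$ to $t$, possibly repeating vertices; $P(G)$ denotes the set of such walks. A channel on $G$ is a charge function $\eta:V\to\mathbb{N}\cup\{\infty\}$ with $\eta(s)=\eta(t)=\infty$ and $\eta(v)\in\mathbb{N}$ otherwise. A flow for $\eta$ is a finitely supported function $\phi:P(G)\to\mathbb{N}$ such that $\phi(v):=\sum_{p\in P(G)} m_v(p)\,\phi(p)\le\eta(v)$ for all $v\in V$, where $m_v(p)$ is the number of occurrences of $v$ in $p$. Its value is $\sum_p\phi(p)$. $\max_\eta$ is the maximum value of a flow for $\eta$; $\eta$ is dead if $\max_\eta=0$. The residual of $\eta$ after $\phi$ is $\eta'(v)=\eta(v)-\phi(v)$. A flow $\phi$ inhibits $\eta$ if the residual of $\eta$ after $\phi$ is dead; $\min_\eta$ is the smallest value of an inhibiting flow for $\eta$. $G$ is weak if $\min_\eta\neq\max_\eta$ for some channel $\eta$ on $G$. A vertex separator is a set $T\subseteq V$ such that every $st$-walk contains a vertex of $T$ (so $\{s\}$ and $\{t\}$ are separators); a minimal vertex separator (mvs) is an inclusion-minimal vertex separator. *)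

From mathcomp Require Import all_boot.
Set Implicit Arguments. Unset Strict Implicit. Unset Printing Implicit Defensive.

Section STGraphs.
Variables (V : finType) (E : rel V) (s t : V).

(* A directed walk from a to b, given as the list of vertices after a. *)
Definition walk (a b : V) (p : seq V) : bool := path E a p && (last a p == b).

(* st-walks (st-paths), as the full list of visited vertices (with repetitions). *)
Definition st_walk (w : seq V) : bool :=
  if w is x :: r then (x == s) && walk x t r else false.

(* Directed st-graph: no self loops (no parallel edges is automatic for a
   relation), s <> t, s has no incoming, t no outgoing edges, every vertex
   lies on some st-walk. *)
Definition st_graph : Prop :=
  [/\ forall v, ~~ E v v, s != t, forall v, ~~ E v s, forall v, ~~ E t v
    & forall v, exists2 w, st_walk w & v \in w].

(* A channel is a charge function V -> N u {oo} with eta s = eta t = oo and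
   finite values elsewhere; we represent it by eta : V -> nat whose values at
   s and t are ignored (they are implicitly oo). *)
Definition channel := V -> nat.

(* A finitely supported flow phi : P(G) -> N is represented by a finite
   multiset of st-walks (a list; walk p has multiplicity phi(p)). *)
Definition flowT := seq (seq V).

Definition load (f : flowT) (v : V) : nat := sumn [seq count_mem v w | w <- f].

Definition value (f : flowT) : nat := size f.

Definition is_flow (eta : channel) (f : flowT) : Prop :=
  all st_walk f /\ forall v, v != s -> v != t -> load f v <= eta v.

(* max_eta = k (a finite value); max_eta = oo iff no k satisfies this *)
Definition is_max (eta : channel) (k : nat) : Prop :=
  (exists2 f, is_flow eta f & value f = k) /\
  (forall f, is_flow eta f -> value f <= k).

Definition dead (eta : channel) : Prop := is_max eta 0.

Definition residual (eta : channel) (f : flowT) : channel :=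
  fun v => eta v - load f v.

Definition inhibits (eta : channel) (f : flowT) : Prop :=
  is_flow eta f /\ dead (residual eta f).

(* min_eta = k (finite); min_eta = oo (inf of empty set) iff no k satisfies this *)
Definition is_min (eta : channel) (k : nat) : Prop :=
  (exists2 f, inhibits eta f & value f = k) /\
  (forall f, inhibits eta f -> k <= value f).

(* min_eta = max_eta as extended naturals *)
Definition min_eq_max (eta : channel) : Prop :=
  forall k, is_min eta k <-> is_max eta k.

Definition weak : Prop := exists eta : channel, ~ min_eq_max eta.

Definition separator (T : {set V}) : Prop :=
  forall w, st_walk w -> exists2 x, x \in w & x \in T.

Definition mvs (T : {set V}) : Prop :=
  separator T /\ forall T' : {set V}, T' \proper T -> ~ separator T'.

End STGraphs.

From mathcomp Require Import all_boot.
From Stdlib Require Import Classical.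
Set Implicit Arguments. Unset Strict Implicit. Unset Printing Implicit Defensive.

(* If no minimal separator admits a walk returning to it, take an inhibiting
   flow [f]: the vertices it saturates separate [s] from [t], hence contain a
   minimal separator [T].  Every walk of [f] meets [T] at most once, so
   [value f] is at least the total capacity of [T], which bounds every flow:
   inhibiting and maximum flows coincide.  Conversely, given a walk leaving a
   minimal separator [T] at [a] and first returning to it at [b],
   minimality yields st-walks meeting [T] only at [a], resp. only at [b];
   splicing gives one st-walk through both.  Capacities on [T] equal to the
   load of the two walks, and generous elsewhere, make the single walk an
   inhibiting flow of value 1 while the maximum is 2. *)

Section Counting.
Variable V : finType.
Implicit Types (T : {set V}) (w : seq V) (f : seq (seq V)).

Lemma load_cons w f v : load (w :: f) v = count_mem v w + load f v.
Proof. by []. Qed.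

Lemma load_cat f g v : load (f ++ g) v = load f v + load g v.
Proof. by rewrite /load map_cat sumn_cat. Qed.

Lemma sum_in_eq T x : \sum_(c in T) (x == c) = (x \in T).
Proof.
have [xT | xNT] := boolP (x \in T).
  rewrite (bigD1 x) //= eqxx big1 // => c /andP[_ /negbTE].
  by rewrite eq_sym => ->.
by rewrite big1 // => c cT; apply/eqP; rewrite eqb0; apply: contraNneq xNT => ->.
Qed.

Lemma sum_count_mem T w : \sum_(c in T) count_mem c w = count (mem T) w.
Proof.
elim: w => [|x w IHw] /=; first by rewrite big1.
by rewrite big_split /= IHw sum_in_eq.
Qed.

Lemma sum_load T f : \sum_(c in T) load f c = sumn [seq count (mem T) w | w <- f].
Proof.
rewrite -count_flatten -sum_count_mem.
by apply: eq_bigr => c _; rewrite count_flatten.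
Qed.

Lemma count_mem_avoid T c w : c \in T -> ~~ has (mem T) w -> count_mem c w = 0.
Proof. by move=> cT hw; apply/count_memPn; apply: contraNN hw => cw; apply/hasP; exists c. Qed.

Lemma count_mem_rcons_avoid T c w x :
  c \in T -> ~~ has (mem T) w -> count_mem c (rcons w x) = (x == c).
Proof. by move=> cT hw; rewrite -cats1 count_cat (count_mem_avoid cT hw) /= addn0. Qed.

Lemma minimal_subset_exists (P : {set V} -> Prop) Z :
  P Z -> exists2 T : {set V}, T \subset Z & P T /\ forall T', T' \proper T -> ~ P T'.
Proof.
elim: {Z}#|Z| {-2}Z (leqnn #|Z|) => [|n IHn] Z cardZ PZ;
  (have [[T' T'Z PT'] | noT'] := classic (exists2 T' : {set V}, T' \proper Z & P T');
   last by exists Z => //; split => // T' T'Z PT'; apply: noT'; exists T').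
- by have := leq_trans (proper_card T'Z) cardZ.
- have [|T TT' minT] := IHn T' _ PT'; first by rewrite -ltnS (leq_trans (proper_card T'Z)).
  by exists T => //; apply: subset_trans TT' (proper_sub T'Z).
Qed.

End Counting.

Section Paths.
Variables (V : finType) (E : rel V) (T : {set V}).

Definition has_return_walk : Prop :=
  exists a b, [/\ a \in T, b \in T & exists p : seq V, p != [::] /\ walk E a b p].

Lemma path_first_in x r : path E x r -> has (mem T) r ->
  exists p y, [/\ y \in T, y \in r, ~~ has (mem T) p & path E x (rcons p y)].
Proof.
elim: r x => [|z r IHr] x //= /andP[exz pzr].
have [zT _ | zNT /= hr] := boolP (z \in T).
  by exists [::], z; rewrite /= zT mem_head exz.
have [p [y [yT yr hp pp]]] := IHr z pzr hr.
by exists (z :: p), y; rewrite /= in_cons yr orbT (negbTE zNT) exz.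
Qed.

Lemma path_last_in x r : path E x r -> has (mem T) (x :: r) ->
  exists y q,
    [/\ y \in T, y \in x :: r, ~~ has (mem T) q, path E y q & last y q = last x r].
Proof.
elim: r x => [|z r IHr] x /=.
  by rewrite orbF => _ xT; exists x, [::]; rewrite mem_head.
case/andP=> exz pzr hxzr.
have [hzr | hNzr] := boolP (has (mem T) (z :: r)).
  have [y [q [yT yzr hq pq lq]]] := IHr z pzr hzr.
  by exists y, q; rewrite in_cons yzr orbT.
exists x, (z :: r); rewrite /= exz pzr mem_head; split => //.
by move: hxzr hNzr; rewrite /= => /orP[|->].
Qed.

Lemma path_count_return x r : path E x r -> 1 < count (mem T) (x :: r) -> has_return_walk.
Proof.
elim: r x => [|z r IHr] x /=; first by rewrite addn0; case: (x \in T).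
case/andP=> exz pzr; have [xT /= | _] := boolP (x \in T); last exact: IHr.
rewrite add1n ltnS => hzr; have {}hzr : has (mem T) (z :: r) by rewrite has_count.
have pxzr : path E x (z :: r) by rewrite /= exz.
have [p [y [yT _ _ pp]]] := path_first_in pxzr hzr.
exists x, y; split => //; exists (rcons p y).
by rewrite -size_eq0 size_rcons /walk pp last_rcons eqxx.
Qed.

End Paths.

Section Flows.
Variables (V : finType) (E : rel V) (s t : V).
Implicit Types (T : {set V}) (eta : channel V) (f g : flowT V).

Definition interior T := forall c, c \in T -> (c != s) && (c != t).

Lemma value_le_sum_load T g :
  separator E s t T -> all (st_walk E s t) g -> value g <= \sum_(c in T) load g c.
Proof.
move=> sepT; rewrite sum_load; elim: g => [|w g IHg] //= /andP[sw sg].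
rewrite -add1n leq_add ?IHg // -has_count.
by have [x xw xT] := sepT w sw; apply/hasP; exists x.
Qed.

Lemma value_le_capacity T eta g :
  separator E s t T -> interior T -> is_flow E s t eta g -> value g <= \sum_(c in T) eta c.
Proof.
move=> sepT intT [sg loadg]; apply: leq_trans (value_le_sum_load sepT sg) _.
by apply: leq_sum => c /intT /andP[cs ct]; exact: loadg.
Qed.

Lemma sum_load_le_value T f :
  (forall w, w \in f -> count (mem T) w <= 1) -> \sum_(c in T) load f c <= value f.
Proof.
rewrite sum_load; elim: f => [|w f IHf] //= once.
rewrite -add1n leq_add ?once ?mem_head // IHf // => w' w'f.
by rewrite once // in_cons w'f orbT.
Qed.

Lemma dead_saturated_separator eta : dead E s t eta ->
  separator E s t [set v | (v != s) && (v != t) && (eta v == 0)].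
Proof.
move=> [_ maxeta] [|x r] // /andP[/eqP-> /andP[pr /eqP lr]]; apply: NNPP => noZ.
(* A simple st-walk avoiding the saturated vertices is a flow of value 1. *)
move: lr; case: (shortenP pr) => r' pr' uniqr' subr' lr'.
have : is_flow E s t eta [:: s :: r'].
  split; first by rewrite /= andbT eqxx /walk pr' lr' eqxx.
  move=> v vs vt; rewrite /load /= addn0 eq_sym (negbTE vs).
  rewrite count_uniq_mem; last by case/andP: uniqr'.
  case: (boolP (v \in r')) => //= vr'; rewrite lt0n; apply: contra_notN noZ => eta0.
  by exists v; rewrite ?inE ?subr' ?vs ?vt ?orbT.
by move/maxeta.
Qed.

Lemma max_flow_inhibits eta f :
  is_max E s t eta (value f) -> is_flow E s t eta f -> inhibits E s t eta f.
Proof.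
move=> [_ maxf] [sf loadf]; split=> //; split; first by exists [::].
move=> g [sg loadg]; rewrite -(leq_add2l (value f)) addn0 /value -size_cat.
apply: maxf; split; first by rewrite all_cat sf.
move=> v vs vt; rewrite load_cat -(subnKC (loadf v vs vt)) leq_add2l.
exact: loadg.
Qed.

Section NoReturnWalk.
Hypothesis no_return : ~ exists T, mvs E s t T /\ has_return_walk E T.

Lemma inhibiting_flow_is_maximum eta f g :
  inhibits E s t eta f -> is_flow E s t eta g -> value g <= value f.
Proof.
move=> [[sf loadf] deadf] flowg.
have [T TZ [sepT minT]] := minimal_subset_exists (dead_saturated_separator deadf).
have saturated c : c \in T -> [&& c != s, c != t & load f c == eta c].
  move/(subsetP TZ); rewrite inE /residual subn_eq0 -andbA => /and3P[cs ct le].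
  by rewrite cs ct eqn_leq le loadf.
have intT : interior T by move=> c /saturated /and3P[-> ->].
have loadT : {in T, load f =1 eta} by move=> c /saturated /and3P[_ _ /eqP].
apply: leq_trans (value_le_capacity sepT intT flowg) _.
rewrite -(eq_bigr _ loadT).
apply: sum_load_le_value => -[//|x r] wf; rewrite leqNgt; apply/negP => twice.
have /and3P[_ pr _] := allP sf _ wf.
by apply: no_return; exists T; split; [split | exact: path_count_return pr twice].
Qed.

Lemma min_eq_max_of_no_return eta : min_eq_max E s t eta.
Proof.
move=> k; split.
  move=> [[f inhf <-] _]; split; first by exists f => //; case: inhf.
  by move=> g; exact: inhibiting_flow_is_maximum.
move=> maxk; have [[f flowf valf] _] := maxk.
have inhf : inhibits E s t eta f by apply: max_flow_inhibits flowf; rewrite valf.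
split; first by exists f.
by move=> f' inhf'; rewrite -valf; exact: inhibiting_flow_is_maximum inhf' flowf.
Qed.

End NoReturnWalk.

Lemma weak_of_flows T fmin fmax :
  separator E s t T -> interior T -> all (st_walk E s t) fmin -> all (st_walk E s t) fmax ->
  {in T, load fmin =1 load fmax} -> value fmax = \sum_(c in T) load fmax c ->
  value fmin < value fmax -> weak E s t.
Proof.
move=> sepT intT sfmin sfmax eqload valmax ltval.
pose eta : channel V := fun v => if v \in T then load fmax v else load fmin v + load fmax v.
have flowmax : is_flow E s t eta fmax.
  by split=> // v _ _; rewrite /eta; case: ifP; rewrite ?leq_addl.
have inhmin : inhibits E s t eta fmin.
  split.
    by split=> // v _ _; rewrite /eta; case: ifPn => [/eqload->|]; rewrite ?leq_addr.
  split; first by exists [::].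
  move=> g /(value_le_capacity sepT intT); rewrite big1 // => c cT.
  by rewrite /residual /eta cT eqload ?subnn.
have maxeta : is_max E s t eta (value fmax).
  split; first by exists fmax.
  move=> g /(value_le_capacity sepT intT); rewrite valmax.
  by under eq_bigr => c cT do rewrite /eta cT.
exists eta => mineqmax; have [_ minle] := (mineqmax _).2 maxeta.
by have := minle _ inhmin; rewrite leqNgt ltval.
Qed.

Lemma st_walk_cat p x q :
  path E s (rcons p x) -> path E x q -> last x q = t -> st_walk E s t (s :: rcons p x ++ q).
Proof.
move=> sp xq qt; rewrite /st_walk /walk eqxx cat_path sp last_rcons xq.
by rewrite last_cat last_rcons qt eqxx.
Qed.

Lemma mvs_private_walk T x : mvs E s t T -> interior T -> x \in T ->
  exists p q, [/\ ~~ has (mem T) p, ~~ has (mem T) q,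
                  path E s (rcons p x), path E x q & last x q = t].
Proof.
move=> [sepT minT] intT xT; apply: NNPP => noW.
apply: (minT _ (properD1 xT)) => w sw; apply: NNPP => avoid; apply: noW.
have onlyx y : y \in w -> y \in T -> y = x.
  move=> yw yT; apply: NNPP => yx; apply: avoid; exists y => //.
  by rewrite in_setD1 yT andbT; apply/eqP.
case: w sw onlyx {avoid} => [|x0 r] // sw onlyx.
move: (sw) => /andP[/eqP e0 /andP[pr /eqP lr]]; subst x0.
have hr : has (mem T) r.
  have [z] := sepT _ sw; rewrite in_cons => /orP[/eqP-> /intT | zr zT].
    by rewrite eqxx.
  by apply/hasP; exists z.
have [p [y [yT yr hp pp]]] := path_first_in pr hr.
rewrite (onlyx y) ?in_cons ?yr ?orbT // in pp.
have hsr : has (mem T) (s :: r) by rewrite /= hr orbT.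
have [z [q [zT zw hq pq lq]]] := path_last_in pr hsr.
rewrite (onlyx z) // in pq lq.
by exists p, q; rewrite lq lr.
Qed.

Lemma separator_set1_source : separator E s t [set s].
Proof. by move=> [|x r] // /andP[/eqP-> _]; exists s; rewrite ?mem_head ?in_set1. Qed.

Lemma separator_set1_sink : separator E s t [set t].
Proof.
by move=> [|x r] // /and3P[_ _ /eqP <-]; exists (last x r); rewrite ?mem_last ?in_set1.
Qed.

Lemma mvs_set1 T x : mvs E s t T -> x \in T -> separator E s t [set x] -> T = [set x].
Proof.
move=> [_ minT] xT sepx; apply: NNPP => Tx; apply: (minT _ _ sepx).
by rewrite properEneq sub1set xT andbT eq_sym; apply/eqP.
Qed.

Lemma mvs_interior T : st_graph E s t -> mvs E s t T -> has_return_walk E T -> interior T.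
Proof.
move=> [_ _ noin noout _] mvsT [a [b [aT bT [p [pn /andP[pab /eqP lab]]]]]] c cT.
apply/andP; split; apply/negP => /eqP ec; subst c.
- move: bT; rewrite (mvs_set1 mvsT cT separator_set1_source) in_set1 => /eqP bs.
  move: pn pab lab; case/lastP: p => [|r y] // _.
  rewrite rcons_path last_rcons => /andP[_ ey] yb.
  by rewrite yb bs (negbTE (noin _)) in ey.
- move: aT pn pab; rewrite (mvs_set1 mvsT cT separator_set1_sink) in_set1 => /eqP ->.
  by case: p {lab} => [|z p] //= _; rewrite (negbTE (noout _)).
Qed.

Lemma weak_of_return_walk T :
  st_graph E s t -> mvs E s t T -> has_return_walk E T -> weak E s t.
Proof.
move=> G mvsT retT; have intT := mvs_interior G mvsT retT.
have [a [b [aT bT [p [pn /andP[pab /eqP lab]]]]]] := retT.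
have hp : has (mem T) p.
  move: pn lab; case/lastP: p {pab} => [|r y] // _.
  by rewrite last_rcons => ->; apply/hasP; exists b; rewrite ?mem_rcons ?mem_head.
have [r [y [yT _ hr ary]]] := path_first_in pab hp.
have [pa [qa [hpa hqa spa pqa lqa]]] := mvs_private_walk mvsT intT aT.
have [py [qy [hpy hqy spy pqy lqy]]] := mvs_private_walk mvsT intT yT.
pose wa := s :: rcons pa a ++ qa.
pose wy := s :: rcons py y ++ qy.
pose W := s :: rcons pa a ++ (rcons r y ++ qy).
have sW : st_walk E s t W.
  apply: st_walk_cat spa _ _; first by rewrite cat_path ary last_rcons pqy.
  by rewrite last_cat last_rcons lqy.
have sNT c : c \in T -> (s == c) = false.
  by move=> /intT /andP[cs _]; rewrite eq_sym (negbTE cs).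
have loadmax c : c \in T -> load [:: wa; wy] c = (a == c) + (y == c).
  move=> cT; rewrite !load_cons /= !sNT // !count_cat.
  by rewrite !(count_mem_rcons_avoid _ cT) ?(count_mem_avoid cT) ?addn0.
apply: (weak_of_flows (fmin := [:: W]) (fmax := [:: wa; wy]) (proj1 mvsT) intT).
- by apply/allP => w; rewrite inE => /eqP ->.
- by apply/allP => w; rewrite !inE => /orP[] /eqP ->; exact: st_walk_cat.
- move=> c cT; rewrite loadmax // load_cons /= sNT // !count_cat.
  by rewrite !(count_mem_rcons_avoid _ cT) ?(count_mem_avoid cT) ?addn0.
- by rewrite (eq_bigr _ loadmax) big_split /= !sum_in_eq aT yT.
- by [].
Qed.

End Flows.

Theorem theorem1 (V : finType) (E : rel V) (s t : V) :
  st_graph E s t ->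
  (weak E s t <->
   exists T : {set V}, mvs E s t T /\
     exists a b, [/\ a \in T, b \in T &
       exists p : seq V, p != [::] /\ walk E a b p]).
Proof.
move=> G; split => [[eta noteq] | [T [mvsT retT]]].
- by apply: NNPP => noret; apply: noteq; exact: min_eq_max_of_no_return.
- exact: weak_of_return_walk G mvsT retT.
Qed.
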